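(* For $p,q\ge 0$ let $K_{p,q}$ be the complete bipartite graph with parts of sizes $p$ and $q$ (every vertex of one part adjacent to every vertex of the other, no edges within parts). Then $$\sum_{p\ge0}\sum_{q\ge0}\mathrm{sa}(K_{p,q})\,\frac{x^p}{p!}\frac{y^q}{q!} = \frac{\cosh x+\cosh y-1}{\cosh(x+y)}.$$
   Context: All graphs are finite, simple and undirected. For a graph $G=(V,E)$ and $V'\subseteq V$, $G|_{V'}$ denotes the induced subgraph on $V'$. The signed a-number $\mathrm{sa}(G)$ is defined recursively: $\mathrm{sa}(G)=1$ if $G$ is the empty graph (no vertices); $\mathrm{sa}(G)=0$ if $G$ has a connected component with an odd number of vertices; otherwise $\mathrm{sa}(G)=-\sum_{V'\subsetneq V}\mathrm{sa}(G|_{V'})$. *)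

From mathcomp Require Import all_boot all_algebra.
From Stdlib Require Import Reals.
From Coquelicot Require Import Coquelicot.

Set Implicit Arguments.
Unset Strict Implicit.
Unset Printing Implicit Defensive.

Import GRing.Theory.

Section SignedANumber.
Variables (T : finType) (e : rel T).

Definition induced_rel (V : {set T}) : rel T :=
  fun x y => [&& x \in V, y \in V & e x y].

Definition component (V : {set T}) (x : T) : {set T} :=
  [set y in V | connect (induced_rel V) x y].

Definition has_odd_component (V : {set T}) : bool :=
  [exists x in V, odd #|component V x|].

(* recursion with fuel; correct whenever fuel >= #|V| *)
Fixpoint sa_fuel (n : nat) (V : {set T}) : int :=
  if V == set0 then (1 : int)
  else if has_odd_component V then (0 : int)
  else match n with
       | 0 => (0 : int)
       | n'.+1 => GRing.opp (\big[GRing.add/(0 : int)]_(W : {set T} | W \proper V) sa_fuel n' W)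
       end.

Definition sa (V : {set T}) : int := sa_fuel #|V| V.

Definition sa_graph : int := sa [set: T].
End SignedANumber.

(* complete bipartite graph K_{p,q} on vertices 'I_(p+q):
   parts {0..p-1} and {p..p+q-1} *)
Definition Kpq_rel (p q : nat) : rel 'I_(p + q) :=
  fun x y => leq (nat_of_ord x).+1 p != leq (nat_of_ord y).+1 p.

Definition sa_K (p q : nat) : int := sa_graph (@Kpq_rel p q).

Definition int_to_R (z : int) : R :=
  match z with
  | Posz n => INR n
  | Negz n => Ropp (INR n.+1)
  end.

(* For a vertex set V of K_{p,q}, the induced graph is K_{a,b} with a, b the numbers
   of vertices of V in the two parts, and it has an odd component iff
   a = 0, b = 0 (isolated vertices) or a + b is odd.  Grouping the subsets of V by
   their part sizes, sa(K_{p,q}) = s(p,q) for the numbers s(a,b) determined by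
   s(0,0) = 1, s(a,b) = 0 when K_{a,b} has an odd component, and
   sum_(i,j) C(a,i) C(b,j) s(i,j) = 0 otherwise.
   For F(x,y) = sum s(p,q) x^p y^q / (p! q!), multiplication by e^{c(x+y)} is the
   binomial transform of the coefficients; for c = 1 the recursion kills every
   coefficient with p, q > 0 and p + q even, and since s vanishes in odd total
   degree the c = -1 transform is the c = 1 one twisted by (-1)^(p+q).  Hence
   (e^{x+y} + e^{-(x+y)}) F = e^x + e^{-x} + e^y + e^{-y} - 2.  The crude bound
   |s(a,b)| <= a! b! 4^(a+b) makes every series converge absolutely for |x|, |y| < 1/8. *)

From Stdlib Require Import Reals Lra.
From Coquelicot Require Import Coquelicot.
From mathcomp Require Import all_boot all_algebra zify ssrZ.
Import GRing.Theory.

Set Implicit Arguments.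
Unset Strict Implicit.
Unset Printing Implicit Defensive.

Local Open Scope nat_scope.

Section GraphComponents.
Variables (T : finType) (e : rel T).

Lemma component_isolated (V : {set T}) x :
  x \in V -> (forall z, z \in V -> ~~ e x z) -> component e V x = [set x].
Proof.
move=> xV noedge; apply/setP => y; rewrite !inE.
apply/andP/eqP => [[_ /connectP [[|z s] /=]]|->]; last by rewrite xV connect0.
- by move=> _ ->.
- rewrite {1}/induced_rel xV /=.
  by case: (boolP (z \in V)) => // zV; rewrite (negbTE (noedge z zV)).
Qed.

Lemma has_odd_component_isolated (V : {set T}) x :
  x \in V -> (forall z, z \in V -> ~~ e x z) -> has_odd_component e V.
Proof.
by move=> xV noedge; apply/existsP; exists x; rewrite xV (component_isolated xV noedge) cards1.
Qed.

End GraphComponents.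

Section SubsetSums.
Variable T : finType.

Lemma sum_subsets_by_card (U : {set T}) (G : nat -> int) :
  (\sum_(Y : {set T} | Y \subset U) G #|Y| =
   \sum_(j < #|U|.+1) 'C(#|U|, j)%:Z * G j)%R.
Proof.
have card_sub (Y : {set T}) : Y \subset U -> #|Y| < #|U|.+1.
  by move=> YU; rewrite ltnS subset_leq_card.
rewrite (partition_big (fun Y : {set T} => inord #|Y| : 'I_#|U|.+1) xpredT) //=.
apply: eq_bigr => j _.
rewrite (eq_bigr (fun _ => G j)); last first.
  by move=> Y /andP[YU /eqP <-]; rewrite inordK ?card_sub.
rewrite (eq_bigl (fun Y => Y \in [set Y : {set T} | Y \subset U & #|Y| == j])); last first.
  move=> Y; rewrite inE; case YU: (Y \subset U) => //=.
  apply/eqP/eqP => [<-|hY]; first by rewrite inordK ?card_sub.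
  by apply/val_inj; rewrite /= inordK ?hY ?card_sub.
by rewrite sumr_const cards_draws -mulr_natl natz.
Qed.

Lemma setUIDK (L X Y : {set T}) : X \subset L -> [disjoint Y & L] ->
  (X :|: Y) :&: L = X /\ (X :|: Y) :\: L = Y.
Proof.
move=> XL YL; split.
  by rewrite setIUl (setIidPl XL) (disjoint_setI0 YL) setU0.
by rewrite setDUl (setDidPl YL) (_ : X :\: L = set0) ?set0U //; apply/eqP; rewrite setD_eq0.
Qed.

Lemma sum_subsets_split (L V : {set T}) (F : nat -> nat -> int) :
  (\sum_(W : {set T} | W \subset V) F #|W :&: L| #|W :\: L| =
   \sum_(i < #|V :&: L|.+1) \sum_(j < #|V :\: L|.+1)
     ('C(#|V :&: L|, i) * 'C(#|V :\: L|, j))%:Z * F i j)%R.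
Proof.
set U1 := V :&: L; set U2 := V :\: L.
pose D := [set XY : {set T} * {set T} | (XY.1 \subset U1) && (XY.2 \subset U2)].
pose join XY : {set T} := XY.1 :|: XY.2.
have splitK (X Y : {set T}) : X \subset U1 -> Y \subset U2 ->
    (X :|: Y) :&: L = X /\ (X :|: Y) :\: L = Y.
  move=> XU YU; apply: setUIDK; first exact: subset_trans XU (subsetIr _ _).
  by rewrite disjoints_subset (subset_trans YU) // /U2 setDE subsetIr.
have subV_join : [set W : {set T} | W \subset V] = join @: D.
  apply/setP => W; rewrite inE; apply/idP/imsetP => [WV|[[X Y]]].
    by exists (W :&: L, W :\: L); rewrite ?inE /= ?setSI ?setSD ?/join /= ?setID.
  rewrite inE /= => /andP[XU YU] ->; rewrite subUset.
  by rewrite (subset_trans XU (subsetIl _ _)) (subset_trans YU (subsetDl _ _)).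
have join_inj : {in D &, injective join}.
  move=> [X Y] [X' Y']; rewrite !inE /= /join /= => /andP[XU YU] /andP[XU' YU'] E.
  have [XE YE] := splitK _ _ XU YU; have [XE' YE'] := splitK _ _ XU' YU'.
  by congr (_, _); [rewrite -XE E XE' | rewrite -YE E YE'].
rewrite (eq_bigl (fun W => W \in join @: D)); last by move=> W; rewrite -subV_join inE.
rewrite big_imset //= (eq_bigr (fun XY : {set T} * {set T} => F #|XY.1| #|XY.2|)); last first.
  by move=> [X Y]; rewrite inE /= => /andP[XU YU]; have [-> ->] := splitK _ _ XU YU.
rewrite (eq_bigl (fun XY : {set T} * {set T} => (XY.1 \subset U1) && (XY.2 \subset U2)));
  last by move=> XY; rewrite inE.
rewrite -(pair_big_dep (fun X : {set T} => X \subset U1) (fun _ (Y : {set T}) => Y \subset U2)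
                       (fun X Y : {set T} => F #|X| #|Y|)) /=.
rewrite (eq_bigr (fun X : {set T} => \sum_(j < #|U2|.+1) 'C(#|U2|, j)%:Z * F #|X| j)%R); last first.
  by move=> X _; rewrite sum_subsets_by_card.
rewrite (sum_subsets_by_card U1 (fun i => \sum_(j < #|U2|.+1) 'C(#|U2|, j)%:Z * F i j)%R).
apply: eq_bigr => i _; rewrite mulr_sumr; apply: eq_bigr => j _.
by rewrite mulrA PoszM.
Qed.

End SubsetSums.

(* For a + b > 0: K_{a,b} has an odd component iff it has an isolated vertex or is
   connected of odd order. *)
Definition bip_odd (a b : nat) : bool := [|| a == 0, b == 0 | odd (a + b)].

(* [sab a b] is the signed a-number of K_{a,b}, computed from the part sizes alone by
   the recursion of [sa_fuel]: the proper induced subgraphs are the K_{i,j}, (i, j) <> (a, b),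
   each occurring 'C(a, i) * 'C(b, j) times. *)
Fixpoint sab_fuel (n a b : nat) : int :=
  if (a == 0) && (b == 0) then 1%R
  else if bip_odd a b then 0%R
  else if n is n'.+1 then
    (- \sum_(k : 'I_a.+1 * 'I_b.+1 | k != (ord_max, ord_max))
         ('C(a, k.1) * 'C(b, k.2))%:Z * sab_fuel n' k.1 k.2)%R
  else 0%R.

Definition sab (a b : nat) : int := sab_fuel (a + b) a b.

Lemma ltn_pair_ord_max a b (k : 'I_a.+1 * 'I_b.+1) :
  k != (ord_max, ord_max) -> k.1 + k.2 < a + b.
Proof.
case: k => i j; rewrite xpair_eqE /= negb_and => neq.
have := leq_ord i; have := leq_ord j.
by case/orP: neq; rewrite -val_eqE /= => ne; lia.
Qed.

Section CompleteBipartite.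
Variables p q : nat.
Local Notation T := 'I_(p + q).
Local Notation e := (@Kpq_rel p q).

Definition left_part : {set T} := [set x : T | x < p].
Definition left_card (V : {set T}) := #|V :&: left_part|.
Definition right_card (V : {set T}) := #|V :\: left_part|.

Lemma card_left_right (V : {set T}) : #|V| = left_card V + right_card V.
Proof. by rewrite cardsID. Qed.

Lemma card_left_part : #|left_part| = p.
Proof.
have -> : left_part = [set lshift q i | i : 'I_p].
  apply/setP => x; rewrite inE; apply/idP/imsetP => [xp|[i _ ->]]; last by rewrite /= ltn_ord.
  by exists (Ordinal xp) => //; apply/val_inj.
by rewrite card_imset ?card_ord //; apply: lshift_inj.
Qed.

Lemma Kpq_one_side_odd (V : {set T}) x :
  x \in V -> (forall y, y \in V -> (y < p) = (x < p)) -> has_odd_component e V.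
Proof.
move=> xV side; apply: (has_odd_component_isolated xV) => z zV.
by rewrite /Kpq_rel (side z zV) eqxx.
Qed.

Lemma Kpq_component_full (V : {set T}) u w x :
  u \in V -> u < p -> w \in V -> ~~ (w < p) -> x \in V -> component e V x = V.
Proof.
move=> uV up wV wp xV; apply/setP => y; rewrite inE.
case: (boolP (y \in V)) => //= yV.
have edge s t : s \in V -> t \in V -> (s < p) != (t < p) -> connect (induced_rel e V) s t.
  by move=> sV tV st; apply: connect1; rewrite /induced_rel sV tV.
have [xp|xp] := boolP (x < p); have [yp|yp] := boolP (y < p).
- by apply: (connect_trans (edge x w _ _ _) (edge w y _ _ _)); rewrite ?xp ?yp ?(negbTE wp).
- by apply: edge; rewrite ?xp ?(negbTE yp).
- by apply: edge; rewrite ?(negbTE xp) ?yp.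
- apply: (connect_trans (edge x u _ _ _) (edge u y _ _ _));
  by rewrite ?(negbTE xp) ?(negbTE yp) ?up.
Qed.

Lemma has_odd_component_Kpq (V : {set T}) : V != set0 ->
  has_odd_component e V = bip_odd (left_card V) (right_card V).
Proof.
case/set0Pn => x xV; rewrite /bip_odd.
have [l0|lpos] := posnP (left_card V).
  have right y : y \in V -> (y < p) = false.
    by move=> yV; move: (in_set0 y); rewrite -(cards0_eq l0) !inE yV.
  by apply: (Kpq_one_side_odd xV) => y yV; rewrite !right.
have [r0|rpos] := posnP (right_card V).
  have left y : y \in V -> (y < p) = true.
    by move=> yV; move: (in_set0 y); rewrite -(cards0_eq r0) !inE yV andbT => /negbFE.
  by apply: (Kpq_one_side_odd xV) => y yV; rewrite !left.
have [u] := card_gt0P lpos; rewrite !inE => /andP[uV up].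
have [w] := card_gt0P rpos; rewrite !inE => /andP[wp wV].
rewrite /= -card_left_right.
apply/existsP/idP => [[z /andP[zV]]|oddV].
  by rewrite (Kpq_component_full uV up wV wp zV).
by exists x; rewrite xV (Kpq_component_full uV up wV wp xV).
Qed.

Lemma sa_fuel_Kpq n (V : {set T}) :
  #|V| <= n -> sa_fuel e n V = sab_fuel n (left_card V) (right_card V).
Proof.
elim: n V => [|n IH] V Vn.
  have -> : V = set0 by apply/eqP; rewrite -cards_eq0 -leqn0.
  by rewrite /= eqxx /left_card /right_card set0I set0D cards0.
rewrite /=; have [->|V0] := eqVneq V set0.
  by rewrite /left_card /right_card set0I set0D cards0.
have -> : (left_card V == 0) && (right_card V == 0) = false.
  by apply: negbTE; rewrite -addn_eq0 -card_left_right cards_eq0.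
rewrite (has_odd_component_Kpq V0); case: bip_odd => //; congr (- _)%R.
set a := left_card V; set b := right_card V.
pose F i j := if (i == a) && (j == b) then 0%R else sab_fuel n i j.
transitivity (\sum_(W : {set T} | W \subset V) F (left_card W) (right_card W))%R.
  rewrite [RHS]big_mkcond [LHS]big_mkcond; apply: eq_bigr => W _.
  rewrite properEneq /F; case: (boolP (W \subset V)) => WV; rewrite ?andbT ?andbF //.
  have -> : (left_card W == a) && (right_card W == b) = (W == V).
    apply/andP/eqP => [[/eqP la /eqP rb]|->] //.
    by apply/eqP; rewrite (@eqEcard _ W V) WV !card_left_right la rb /=.
  have [->|neWV] := eqVneq W V; first by [].
  apply: IH; rewrite -ltnS; apply: leq_trans (proper_card _) Vn.
  by rewrite properEneq neWV.
transitivity (\sum_(i < a.+1) \sum_(j < b.+1) ('C(a, i) * 'C(b, j))%:Z * F i j)%R.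
  exact: sum_subsets_split.
rewrite pair_bigA /= [RHS]big_mkcond; apply: eq_bigr => k _.
case: k => i j; rewrite /F /= xpair_eqE -!val_eqE /=.
by case: ifP => _; rewrite ?mulr0.
Qed.

End CompleteBipartite.

Lemma sa_K_sab p q : sa_K p q = sab p q.
Proof.
have left : left_card [set: 'I_(p + q)] = p by rewrite /left_card setTI card_left_part.
have right : right_card [set: 'I_(p + q)] = q.
  by apply/eqP; rewrite -(eqn_add2l p) -{1}left -card_left_right cardsT card_ord.
by rewrite /sa_K /sa_graph /sa sa_fuel_Kpq // left right cardsT card_ord.
Qed.

Lemma sab_fuel_enough n m a b :
  a + b <= n -> a + b <= m -> sab_fuel n a b = sab_fuel m a b.
Proof.
elim: n m a b => [|n IH] [|m] a b abn abm //=.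
- by move: abn; rewrite leqn0 addn_eq0 => /andP[/eqP -> /eqP ->].
- by move: abm; rewrite leqn0 addn_eq0 => /andP[/eqP -> /eqP ->].
case: ifP => // _; case: ifP => // _; congr (- _)%R.
apply: eq_bigr => k /ltn_pair_ord_max kab; congr (_ * _)%R.
by apply: IH; rewrite -ltnS (leq_trans kab).
Qed.

Lemma sab_bip_odd a b : 0 < a + b -> bip_odd a b -> sab a b = 0%R.
Proof.
move=> ab0 odd_ab; rewrite /sab.
have nz : (a == 0) && (b == 0) = false by apply/negbTE; rewrite -addn_eq0 -lt0n.
by case: (a + b) => [|n] /=; rewrite nz odd_ab.
Qed.

Lemma sabE a b : ~~ bip_odd a b ->
  sab a b = (- \sum_(k : 'I_a.+1 * 'I_b.+1 | k != (ord_max, ord_max))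
                 ('C(a, k.1) * 'C(b, k.2))%:Z * sab k.1 k.2)%R.
Proof.
move=> /norP[/negPf a0 /norP[/negPf b0 /negPf even_ab]].
have [n ab] : exists n, a + b = n.+1.
  by exists (a + b).-1; rewrite prednK // addn_gt0 lt0n a0.
rewrite /sab {1}ab /= a0 /bip_odd a0 b0 even_ab /=; congr (- _)%R.
apply: eq_bigr => k /ltn_pair_ord_max kab; congr (_ * _)%R.
by apply: sab_fuel_enough; rewrite // -ltnS -ab.
Qed.

Lemma sum_binom_sab a b : ~~ bip_odd a b ->
  (\sum_(i < a.+1) \sum_(j < b.+1) ('C(a, i) * 'C(b, j))%:Z * sab (a - i)%N (b - j)%N = 0)%R.
Proof.
move=> even_ab.
have rev_sum :
    (\sum_(i < a.+1) \sum_(j < b.+1) ('C(a, i) * 'C(b, j))%:Z * sab (a - i)%N (b - j)%N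
     = \sum_(i < a.+1) \sum_(j < b.+1) ('C(a, i) * 'C(b, j))%:Z * sab i j)%R.
  rewrite (reindex_inj rev_ord_inj) /=; apply: eq_bigr => i _.
  rewrite (reindex_inj rev_ord_inj) /=; apply: eq_bigr => j _.
  have [ia jb] := (leq_ord i, leq_ord j).
  by rewrite /= !subSS (subKn ia) (subKn jb) (bin_sub ia) (bin_sub jb).
rewrite rev_sum pair_bigA (bigD1 (ord_max, ord_max)) //= !binn mul1r.
by rewrite (sabE even_ab) addNr.
Qed.

Lemma leq_absz_sum (I : finType) (P : pred I) (F : I -> int) :
  `|(\sum_(i | P i) F i)%R| <= \sum_(i | P i) `|F i|.
Proof.
elim/big_rec2: _ => // i s1 s2 _ IH.
by apply: leq_trans (leq_add (leqnn _) IH); lia.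
Qed.

Lemma sum_pow4_off_corner a b :
  \sum_(k : 'I_a.+1 * 'I_b.+1 | k != (ord_max, ord_max)) 4 ^ (k.1 + k.2)
  <= 4 ^ (a + b).
Proof.
have geom m : (3 * \sum_(i < m.+1) 4 ^ i).+1 = 4 ^ m.+1.
  elim: m => [|m IH]; first by rewrite big_ord_recr big_ord0.
  rewrite big_ord_recr /= (expnS 4 m.+1); move: IH.
  by set s := \sum_(i < m.+1) _; set X := 4 ^ m.+1; lia.
have all_terms : \sum_(k : 'I_a.+1 * 'I_b.+1) 4 ^ (k.1 + k.2)
    = (\sum_(i < a.+1) 4 ^ i) * (\sum_(j < b.+1) 4 ^ j).
  rewrite -(pair_bigA _ (fun (i : 'I_a.+1) (j : 'I_b.+1) => 4 ^ (i + j))) big_distrl /=.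
  apply: eq_bigr => i _.
  by rewrite big_distrr; apply: eq_bigr => j _; rewrite expnD.
move: all_terms (geom a) (geom b); rewrite (bigD1 (ord_max, ord_max)) //= !expnS expnD.
set X := \sum_(k | _) _; set SA := \sum_(i < a.+1) _; set SB := \sum_(j < b.+1) _.
move=> all_terms geomA geomB.
have hA : 3 * SA < 4 * 4 ^ a by rewrite -geomA.
have hB : 3 * SB < 4 * 4 ^ b by rewrite -geomB.
by have := ltn_mul hA hB; rewrite mulnACA [4 * _ * _]mulnACA -all_terms; lia.
Qed.

Lemma sab_bound a b : `|sab a b| <= a`! * b`! * 4 ^ (a + b).
Proof.
have [n] := ubnP (a + b); elim: n a b => // n IH a b abn.
have [/eqP|ab0] := posnP (a + b); first by rewrite addn_eq0 => /andP[/eqP -> /eqP ->].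
have [odd_ab|even_ab] := boolP (bip_odd a b); first by rewrite sab_bip_odd.
rewrite (sabE even_ab) abszN; apply: leq_trans (leq_absz_sum _ _) _.
apply: (@leq_trans (\sum_(k | k != (ord_max, ord_max)) a`! * b`! * 4 ^ (k.1 + k.2))).
- apply: leq_sum => k /ltn_pair_ord_max kab; rewrite abszM absz_nat.
  have IHk := IH k.1 k.2 (leq_trans kab (abn : a + b <= n)).
  apply: leq_trans (leq_mul (leqnn _) IHk) _.
  have bin_fact_le m i : i <= m -> 'C(m, i) * i`! <= m`!.
    by move=> im; rewrite -(bin_fact im) mulnA leq_pmulr ?fact_gt0.
  have -> : 'C(a, k.1) * 'C(b, k.2) * (k.1`! * k.2`! * 4 ^ (k.1 + k.2))
      = 'C(a, k.1) * k.1`! * ('C(b, k.2) * k.2`!) * 4 ^ (k.1 + k.2) by lia.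
  by apply: leq_mul => //; apply: leq_mul; apply: bin_fact_le; apply: leq_ord.
- by rewrite -(big_distrr (a`! * b`!)) /= leq_mul2l sum_pow4_off_corner orbT.
Qed.

Unset Implicit Arguments.
Local Open Scope R_scope.

Lemma int_to_RE z : int_to_R z = IZR (Z_of_int z).
Proof.
case: z => n; rewrite /int_to_R INR_IZR_INZ; first by f_equal; lia.
by rewrite -opp_IZR; f_equal; lia.
Qed.

Lemma int_to_RD x y : int_to_R (x + y)%R = int_to_R x + int_to_R y.
Proof. by rewrite !int_to_RE -plus_IZR; f_equal; lia. Qed.

Lemma int_to_RM x y : int_to_R (x * y)%R = int_to_R x * int_to_R y.
Proof. by rewrite !int_to_RE -mult_IZR; f_equal; nia. Qed.

Lemma int_to_R_sum n (F : nat -> int) :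
  int_to_R (\sum_(i < n.+1) F i)%R = sum_f_R0 (fun i => int_to_R (F i)) n.
Proof.
elim: n => [|n IH]; first by rewrite big_ord_recr big_ord0 /= add0r.
by rewrite big_ord_recr /= int_to_RD IH.
Qed.

Lemma Rabs_int_to_R z : Rabs (int_to_R z) = INR `|z|%N.
Proof.
by case: z => n; rewrite /int_to_R ?Rabs_Ropp Rabs_pos_eq //; apply: pos_INR.
Qed.

Lemma factorial_fact n : n`! = Factorial.fact n.
Proof. by elim: n => // n IH; rewrite factS IH /= multE. Qed.

Lemma INR_fact_pos n : 0 < INR n`!.
Proof. by rewrite factorial_fact; apply: INR_fact_lt_0. Qed.

Lemma INR_fact_neq0 n : INR n`! <> 0.
Proof. exact: Rgt_not_eq (INR_fact_pos n). Qed.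

Lemma INR_bin n k : (k <= n)%N ->
  INR 'C(n, k) = INR n`! / (INR k`! * INR (n - k)`!).
Proof.
move=> kn; rewrite -(bin_fact kn) !mult_INR.
by field; split; apply: INR_fact_neq0.
Qed.

Lemma neg1_pow m : (-1) ^ m = if odd m then -1 else 1.
Proof. by elim: m => //= m ->; case: (odd m) => /=; ring. Qed.

Lemma is_series_exp z : is_series (fun n => z ^ n / INR n`!) (exp z).
Proof.
apply: is_series_ext (is_exp_Reals z) => n.
by rewrite pow_n_pow factorial_fact.
Qed.

Lemma ex_series_Rabs_exp z : ex_series (fun n => Rabs (z ^ n / INR n`!)).
Proof.
exists (exp (Rabs z)); apply: is_series_ext (is_series_exp (Rabs z)) => n.
by rewrite Rabs_mult Rabs_inv RPow_abs (Rabs_pos_eq _ (Rlt_le _ _ (INR_fact_pos n))).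
Qed.

Lemma is_series_delta0 v : is_series (fun n => if n == 0%N then v else 0) v.
Proof.
have := is_series_scal_l v _ _ (is_series_exp 0).
rewrite exp_0 /scal /= /mult /= Rmult_1_r.
by apply: is_series_ext => -[|n] /=; rewrite /scal /= /mult /=;
  [field | rewrite Rmult_0_l /Rdiv !Rmult_0_l Rmult_0_r].
Qed.

Lemma is_series_sum_f_R0 N (A : nat -> nat -> R) (L : nat -> R) :
  (forall k, (k <= N)%N -> is_series (A k) (L k)) ->
  is_series (fun q => sum_f_R0 (fun k => A k q) N) (sum_f_R0 L N).
Proof.
elim: N => [|N IH] AL /=; first exact: AL.
by apply: is_series_plus; [apply: IH => k kN; apply: AL; apply: leqW | apply: AL].
Qed.

Definition binom_transform (c : R) (u : nat -> R) (n : nat) : R :=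
  sum_f_R0 (fun k => INR 'C(n, k) * c ^ k * u (n - k)%N) n.

(* The binomial transform is the Cauchy product with the exponential series of [c z]. *)
Lemma is_series_binom_transform c z u U :
  ex_series (fun n => Rabs (u n * (z ^ n / INR n`!))) ->
  is_series (fun n => u n * (z ^ n / INR n`!)) U ->
  is_series (fun n => binom_transform c u n * (z ^ n / INR n`!)) (exp (c * z) * U).
Proof.
move=> u_abs uU.
have := is_series_mult _ _ _ _ (is_series_exp (c * z)) uU (ex_series_Rabs_exp (c * z)) u_abs.
apply: is_series_ext => n; rewrite /binom_transform [RHS]Rmult_comm scal_sum.
apply: PartSum.sum_eq => k /leP kn; rewrite (INR_bin _ _ kn).
have -> : z ^ n = z ^ k * z ^ (n - k)%N by rewrite -pow_add; f_equal; lia.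
by rewrite minusE Rpow_mult_distr; field; repeat split; apply: INR_fact_neq0.
Qed.

Lemma Rabs_egf_term a z n :
  Rabs (a * (z ^ n / INR n`!)) = Rabs a * (Rabs z ^ n / INR n`!).
Proof.
rewrite Rabs_mult Rabs_mult Rabs_inv RPow_abs.
by rewrite (Rabs_pos_eq _ (Rlt_le _ _ (INR_fact_pos n))).
Qed.

Lemma ex_series_geom_scal C r : 0 <= r <= 1/2 -> ex_series (fun n => C * r ^ n).
Proof.
move=> r_small; apply: (ex_series_ext (fun n => scal C (r ^ n))) => //.
by apply: ex_series_scal; apply: ex_series_geom; rewrite Rabs_pos_eq; lra.
Qed.

Definition binom_transform2 (c : R) (s : nat -> nat -> R) (p q : nat) : R :=
  binom_transform c (fun k => binom_transform c (s k) q) p.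

Section DoubleEGF.
Variable s : nat -> nat -> R.
Hypothesis s_bound : forall p q, Rabs (s p q) <= INR p`! * INR q`! * 4 ^ p * 4 ^ q.
Variables x y : R.
(* Then all rows and the column are dominated by geometric series of ratio 4 |y|, 4 |x| <= 1/2. *)
Hypotheses (x_small : Rabs x < 1/8) (y_small : Rabs y < 1/8).

Definition egf_row p := Series (fun q => s p q * (y ^ q / INR q`!)).

Lemma egf_row_term_bound p q :
  Rabs (s p q * (y ^ q / INR q`!)) <= INR p`! * 4 ^ p * (4 * Rabs y) ^ q.
Proof.
rewrite Rabs_egf_term; apply: Rle_trans.
  apply: Rmult_le_compat_r; last exact: s_bound.
  by apply: Rdiv_le_0_compat; [apply: pow_le; apply: Rabs_pos | apply: INR_fact_pos].
by right; rewrite Rpow_mult_distr; field; apply: INR_fact_neq0.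
Qed.

Lemma ex_series_egf_row_Rabs p : ex_series (fun q => Rabs (s p q * (y ^ q / INR q`!))).
Proof.
apply: (ex_series_le _ (fun q => INR p`! * 4 ^ p * (4 * Rabs y) ^ q)).
  by move=> q; rewrite /norm /= /abs /= Rabs_Rabsolu; apply: egf_row_term_bound.
by apply: ex_series_geom_scal; have := Rabs_pos y; lra.
Qed.

Lemma egf_row_bound p : Rabs (egf_row p) <= 2 * (INR p`! * 4 ^ p).
Proof.
set C := INR p`! * 4 ^ p; set r := 4 * Rabs y.
have r_small : 0 <= r <= 1/2 by have := Rabs_pos y; rewrite /r; lra.
have r_lt1 : Rabs r < 1 by rewrite Rabs_pos_eq; lra.
have geom := is_series_scal_l C _ _ (is_series_geom r r_lt1).
apply: Rle_trans (Series_Rabs _ (ex_series_egf_row_Rabs p)) _.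
apply: Rle_trans (Series_le _ _ _ (ex_intro _ _ geom)) _.
  by move=> q; split; [apply: Rabs_pos | apply: egf_row_term_bound].
rewrite (is_series_unique _ _ geom) /scal /= /mult /= Rmult_comm.
apply: Rmult_le_compat_r.
  by apply: Rmult_le_pos; [apply: Rlt_le; apply: INR_fact_pos | apply: pow_le; lra].
by rewrite -[2]Rinv_inv; apply: Rinv_le_contravar; lra.
Qed.

Lemma ex_series_egf_col_Rabs :
  ex_series (fun p => Rabs (egf_row p * (x ^ p / INR p`!))).
Proof.
apply: (ex_series_le _ (fun p => 2 * (4 * Rabs x) ^ p)).
  move=> p; rewrite /norm /= /abs /= Rabs_Rabsolu Rabs_egf_term; apply: Rle_trans.
    apply: Rmult_le_compat_r; last exact: egf_row_bound.
    by apply: Rdiv_le_0_compat; [apply: pow_le; apply: Rabs_pos | apply: INR_fact_pos].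
  by right; rewrite Rpow_mult_distr; field; apply: INR_fact_neq0.
by apply: ex_series_geom_scal; have := Rabs_pos x; lra.
Qed.

Lemma is_series_binom_transform2_row c p :
  is_series (fun q => binom_transform2 c s p q * (y ^ q / INR q`!))
            (exp (c * y) * binom_transform c egf_row p).
Proof.
have row k : is_series (fun q => binom_transform c (s k) q * (y ^ q / INR q`!))
                       (exp (c * y) * egf_row k).
  apply: is_series_binom_transform; first exact: ex_series_egf_row_Rabs.
  by apply: Series_correct; apply: ex_series_Rabs; apply: ex_series_egf_row_Rabs.
have := is_series_sum_f_R0 p
  (fun k q => INR 'C(p, k) * c ^ k
              * (binom_transform c (s (p - k)%N) q * (y ^ q / INR q`!)))
  (fun k => INR 'C(p, k) * c ^ k * (exp (c * y) * egf_row (p - k)%N))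
  (fun k _ => is_series_scal_l _ _ _ (row (p - k)%N)).
have -> : sum_f_R0 (fun k => INR 'C(p, k) * c ^ k * (exp (c * y) * egf_row (p - k)%N)) p
    = exp (c * y) * binom_transform c egf_row p.
  by rewrite /binom_transform scal_sum; apply: PartSum.sum_eq => k _; ring.
apply: is_series_ext => q; rewrite /binom_transform2 /binom_transform.
by rewrite [RHS]Rmult_comm scal_sum; apply: PartSum.sum_eq => k _; ring.
Qed.

Lemma is_series_binom_transform2 c :
  is_series (fun p => Series (fun q => binom_transform2 c s p q * (y ^ q / INR q`!))
                      * (x ^ p / INR p`!))
            (exp (c * (x + y)) * Series (fun p => egf_row p * (x ^ p / INR p`!))).
Proof.
have col := is_series_binom_transform c x egf_row _ ex_series_egf_col_Rabs
  (Series_correct _ (ex_series_Rabs _ ex_series_egf_col_Rabs)).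
have := is_series_scal_l (exp (c * y)) _ _ col.
rewrite /scal /= /mult /= -Rmult_assoc -exp_plus -Rmult_plus_distr_l Rplus_comm.
apply: is_series_ext => p.
by rewrite (is_series_unique _ _ (is_series_binom_transform2_row c p)) Rmult_assoc.
Qed.

End DoubleEGF.

Lemma sum_f_R0_last f n : (forall k, (k < n)%N -> f k = 0) -> sum_f_R0 f n = f n.
Proof.
case: n => [|n] f0 //=; rewrite sum_eq_R0 ?Rplus_0_l // => k /leP kn.
by apply: f0; rewrite ltnS.
Qed.

Lemma binom_transform2E c s p q : binom_transform2 c s p q =
  sum_f_R0 (fun k => sum_f_R0 (fun l =>
    INR 'C(p, k) * INR 'C(q, l) * (c ^ k * c ^ l) * s (p - k)%N (q - l)%N) q) p.
Proof.
apply: PartSum.sum_eq => k _; rewrite /binom_transform scal_sum.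
by apply: PartSum.sum_eq => l _; ring.
Qed.

Lemma binom_transform2_opp s p q : (forall a b, odd (a + b) -> s a b = 0) ->
  binom_transform2 (-1) s p q = (-1) ^ (p + q) * binom_transform2 1 s p q.
Proof.
move=> s_odd; rewrite !binom_transform2E scal_sum; apply: PartSum.sum_eq => k /leP kp.
rewrite Rmult_comm scal_sum; apply: PartSum.sum_eq => l /leP lq.
have [odd_kl|even_kl] := boolP (odd ((p - k) + (q - l))); first by rewrite s_odd //; ring.
have parity : odd (p + q) = odd (k + l).
  have -> : (p + q)%N = (k + l + (p - k + (q - l)))%N by lia.
  by rewrite oddD (negbTE even_kl) addbF.
rewrite !pow1 !neg1_pow parity oddD.
by case: (odd k) (odd l) => [] [] /=; ring.
Qed.

Definition sabR (a b : nat) : R := int_to_R (sab a b).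

Lemma sabR_bound p q : Rabs (sabR p q) <= INR p`! * INR q`! * 4 ^ p * 4 ^ q.
Proof.
have INR_expn m n : INR (m ^ n)%N = INR m ^ n.
  by elim: n => // n IH; rewrite expnS mult_INR IH.
have INR4 : INR 4 = 4 by rewrite /=; ring.
rewrite /sabR Rabs_int_to_R; move/leP/le_INR: (sab_bound p q).
by rewrite expnD !mult_INR !INR_expn INR4 -!Rmult_assoc.
Qed.

Lemma sabR_odd a b : odd (a + b) -> sabR a b = 0.
Proof.
by move=> odd_ab; rewrite /sabR sab_bip_odd // /bip_odd ?odd_ab ?orbT // odd_gt0.
Qed.

Lemma binom_transform2_sabR p q : ~~ odd (p + q) ->
  binom_transform2 1 sabR p q = if (p == 0%N) || (q == 0%N) then 1 else 0.
Proof.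
move=> even_pq; rewrite binom_transform2E.
have sabR_side0 a b : (0 < a + b)%N -> (a == 0%N) || (b == 0%N) -> sabR a b = 0.
  by move=> ab0 ab; rewrite /sabR sab_bip_odd // /bip_odd orbA ab.
have [->|p0] := posnP p.
  rewrite /= sum_f_R0_last => [|l lq].
    by rewrite !subnn !binn !pow1 /sabR /=; ring.
  by rewrite sabR_side0 ?subn_gt0 //; ring.
have [->|q0] := posnP q.
  rewrite /= (sum_f_R0_last _ p) => [|k kp].
    by rewrite !subnn !binn !pow1 /sabR /=; ring.
  by rewrite sabR_side0 ?addn0 ?subn_gt0 ?orbT //; ring.
have even_bip : ~~ bip_odd p q by rewrite /bip_odd !eqn0Ngt p0 q0.
rewrite /= -[RHS]/(int_to_R 0%R) -(sum_binom_sab even_bip).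
rewrite (int_to_R_sum p
  (fun i => \sum_(j < q.+1) ('C(p, i) * 'C(q, j))%:Z * sab (p - i)%N (q - j)%N)%R).
apply: PartSum.sum_eq => k _.
rewrite (int_to_R_sum q (fun j => ('C(p, k) * 'C(q, j))%:Z * sab (p - k)%N (q - j)%N)%R).
apply: PartSum.sum_eq => l _.
by rewrite int_to_RM PoszM int_to_RM !pow1 /sabR /=; ring.
Qed.

Lemma binom_transform2_sabR_sym p q :
  binom_transform2 1 sabR p q + binom_transform2 (-1) sabR p q
  = (1 + (-1) ^ (p + q)) * (if (p == 0%N) || (q == 0%N) then 1 else 0).
Proof.
rewrite binom_transform2_opp; last exact: sabR_odd.
have [odd_pq|even_pq] := boolP (odd (p + q)); rewrite neg1_pow ?odd_pq.
  by ring.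
by rewrite (negbTE even_pq) binom_transform2_sabR //; ring.
Qed.

Lemma is_series_sabR_sym_row y p :
  is_series (fun q => (1 + (-1) ^ (p + q)) * (if (p == 0%N) || (q == 0%N) then 1 else 0)
                      * (y ^ q / INR q`!))
            (if p == 0%N then exp y + exp (- y) else 1 + (-1) ^ p).
Proof.
case: p => [|p] /=.
  have := is_series_plus _ _ _ _ (is_series_exp y) (is_series_exp (- y)).
  apply: is_series_ext => q; rewrite /plus /= add0n.
  replace (- y) with (-1 * y) by ring.
  by rewrite Rpow_mult_distr; field; apply: INR_fact_neq0.
apply: is_series_ext (is_series_delta0 _) => -[|q] /=.
  by rewrite addn0 /=; field.
by ring.
Qed.

Lemma is_series_sabR_sym_col x y :
  is_series (fun p => (if p == 0%N then exp y + exp (- y) else 1 + (-1) ^ p)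
                      * (x ^ p / INR p`!))
            (exp x + exp (- x) + (exp y + exp (- y) - 2)).
Proof.
have := is_series_plus _ _ _ _
  (is_series_plus _ _ _ _ (is_series_exp x) (is_series_exp (- x)))
  (is_series_delta0 (exp y + exp (- y) - 2)).
apply: is_series_ext => -[|p] /=; rewrite /plus /=.
  by field.
replace (- x) with (-1 * x) by ring.
by rewrite Rpow_mult_distr; field; apply: INR_fact_neq0.
Qed.

Lemma is_series_egf_sabR x y : Rabs x < 1/8 -> Rabs y < 1/8 ->
  is_series (fun p => egf_row sabR y p * (x ^ p / INR p`!))
            ((cosh x + cosh y - 1) / cosh (x + y)).
Proof.
move=> x_small y_small.
set G := Series (fun p => egf_row sabR y p * (x ^ p / INR p`!)).
have inner c p := is_series_binom_transform2_row sabR sabR_bound y y_small c p.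
have outer c := is_series_binom_transform2 sabR sabR_bound x y x_small y_small c.
have sym_outer := is_series_plus _ _ _ _ (outer 1) (outer (-1)).
rewrite /plus /= in sym_outer.
have sym_value : exp (1 * (x + y)) * G + exp (-1 * (x + y)) * G
    = exp x + exp (- x) + (exp y + exp (- y) - 2).
  rewrite -(is_series_unique _ _ sym_outer); apply: is_series_unique.
  apply: is_series_ext (is_series_sabR_sym_col x y) => p.
  rewrite -Rmult_plus_distr_r -Series_plus; try by eexists; apply: inner.
  rewrite -(is_series_unique _ _ (is_series_sabR_sym_row y p)); congr (_ * _).
  by apply: Series_ext => q; rewrite -binom_transform2_sabR_sym; ring.
rewrite Rmult_1_l -Ropp_mult_distr_l Rmult_1_l in sym_value.
have cosh_pos : 0 < cosh (x + y).
  by rewrite /cosh; have := exp_pos (x + y); have := exp_pos (- (x + y)); lra.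
have cosh_eq : G * cosh (x + y) = cosh x + cosh y - 1.
  apply: (Rmult_eq_reg_l 2); last lra.
  transitivity (exp (x + y) * G + exp (- (x + y)) * G); first by rewrite /cosh; field.
  by rewrite sym_value /cosh; field.
rewrite -cosh_eq /Rdiv Rmult_assoc Rinv_r ?Rmult_1_r; last exact: Rgt_not_eq.
apply: Series_correct; apply: ex_series_Rabs.
exact: (ex_series_egf_col_Rabs _ sabR_bound _ _ x_small y_small).
Qed.

Theorem mainTheorem6 :
  exists r : R, 0 < r /\
    forall x y : R, Rabs x < r -> Rabs y < r ->
      (forall p : nat,
          ex_series (fun q : nat =>
            int_to_R (sa_K p q) * (x ^ p / INR (factorial p)) * (y ^ q / INR (factorial q)))) /\
      is_series
        (fun p : nat => Series (fun q : nat =>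
            int_to_R (sa_K p q) * (x ^ p / INR (factorial p)) * (y ^ q / INR (factorial q))))
        ((cosh x + cosh y - 1) / cosh (x + y)).
Proof.
exists (1/8); split; first lra.
move=> x y x_small y_small.
have termE p q : int_to_R (sa_K p q) * (x ^ p / INR p`!) * (y ^ q / INR q`!)
    = (x ^ p / INR p`!) * (sabR p q * (y ^ q / INR q`!)).
  by rewrite sa_K_sab /sabR; ring.
split=> [p|].
  apply: ex_series_ext (ex_series_scal_l (x ^ p / INR p`!) _ _) => [q|].
    by rewrite termE.
  exact: ex_series_Rabs (ex_series_egf_row_Rabs _ sabR_bound _ y_small p).
apply: is_series_ext (is_series_egf_sabR _ _ x_small y_small) => p.
by rewrite /egf_row Rmult_comm -Series_scal_l; apply: Series_ext => q; rewrite termE.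
Qed.
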